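(* Let $G$ be a topological group and $H$ a closed subgroup of finite index in $G$. Let $(\operatorname{Bohr}(G),\beta)$ be the Bohr compactification of $G$ and set $K=\overline{\beta(H)}$. Then: (i) $K$ is a subgroup of finite index in $\operatorname{Bohr}(G)$; (ii) $(K,\beta|_H)$ is a Bohr compactification of $H$; (iii) $K$ and $\operatorname{Bohr}(G)$ have the same connected component of the identity.
   Context: A Bohr compactification of a topological group $G$ is a pair $(\operatorname{Bohr}(G),\beta)$ with $\operatorname{Bohr}(G)$ compact and $\beta$ a continuous homomorphism with dense image such that every continuous homomorphism from $G$ to a compact group $L$ factors as $\alpha'\circ\beta$ with $\alpha':\operatorname{Bohr}(G)\to L$ continuous. *)

From HB Require Import structures.
From mathcomp Require Import all_boot all_algebra all_classical.
From mathcomp Require Import topology.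

Set Implicit Arguments.
Unset Strict Implicit.
Unset Printing Implicit Defensive.

Local Open Scope classical_set_scope.

Record topological_group (T : topologicalType) (mul : T -> T -> T)
    (inv : T -> T) (one : T) : Prop := TopologicalGroup {
  tg_mulA : forall x y z, mul x (mul y z) = mul (mul x y) z;
  tg_mul1g : forall x, mul one x = x;
  tg_mulVg : forall x, mul (inv x) x = one;
  tg_mul_cont : continuous (fun p : T * T => mul p.1 p.2);
  tg_inv_cont : continuous inv }.

Definition compact_group (T : topologicalType) (mul : T -> T -> T)
    (inv : T -> T) (one : T) : Prop :=
  [/\ topological_group mul inv one, compact [set: T] & hausdorff_space T].

Definition group_hom (T U : Type) (mulT : T -> T -> T) (mulU : U -> U -> U)
    (f : T -> U) : Prop :=
  forall x y, f (mulT x y) = mulU (f x) (f y).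

Definition bohr_compactification (G : topologicalType) (mulG : G -> G -> G)
    (invG : G -> G) (oneG : G)
    (B : topologicalType) (mulB : B -> B -> B) (invB : B -> B) (oneB : B)
    (beta : G -> B) : Prop :=
  [/\ compact_group mulB invB oneB,
      continuous beta,
      group_hom mulG mulB beta,
      dense (range beta) &
      forall (L : topologicalType) (mulL : L -> L -> L) (invL : L -> L)
             (oneL : L) (alpha : G -> L),
        compact_group mulL invL oneL -> continuous alpha ->
        group_hom mulG mulL alpha ->
        exists alpha' : B -> L, continuous alpha' /\ alpha = alpha' \o beta].

Record subgroup (T : Type) (mul : T -> T -> T) (inv : T -> T) (one : T)
    (H : set T) : Prop := Subgroup {
  sg_one : H one;
  sg_mul : forall x y, H x -> H y -> H (mul x y);
  sg_inv : forall x, H x -> H (inv x) }.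

Definition finite_index (T : Type) (mul : T -> T -> T) (H : set T) : Prop :=
  finite_set [set mul x @` H | x in [set: T]].

Section SubgroupOps.
Context (T : Type) (mul : T -> T -> T) (inv : T -> T) (one : T) (H : set T)
  (hH : subgroup mul inv one H).

Definition sub_mul (x y : set_type H) : set_type H :=
  exist _ (mul (val x) (val y))
    (mem_set (sg_mul hH (set_valP x) (set_valP y))).

Definition sub_inv (x : set_type H) : set_type H :=
  exist _ (inv (val x)) (mem_set (sg_inv hH (set_valP x))).

Definition sub_one : set_type H := exist _ one (mem_set (sg_one hH)).
End SubgroupOps.

Definition restr_to_closure (G B : topologicalType) (beta : G -> B) (H : set G)
    (h : set_type H) : set_type (closure (beta @` H)) :=
  exist _ (beta (val h))
    (mem_set (@subset_closure B (beta @` H) _ (imageP beta (set_valP h)))).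
Arguments restr_to_closure {G B} beta H h.

(* Fix a transversal t_1, ..., t_n of the cosets of H.  Since beta has dense
   image, the finitely many closed translates beta(t_i) K cover B, so K has
   finite index; a closed subgroup of finite index is open, hence K (and H)
   are clopen, which gives (i) and (iii).  K is a closed subgroup of a compact
   group, hence a compact group, and beta|_H has dense image in K.  For the
   universal property in (ii) we use induction of representations: a
   continuous homomorphism alpha : H -> L into a compact group L induces a
   continuous homomorphism Phi : G -> L wr S_n (a compact group), whose
   coordinate at the trivial coset restricts to alpha on H.  Factoring Phi
   through beta and reading off that coordinate yields the extension of alpha
   to K. *)
From HB Require Import structures.
From mathcomp Require Import all_boot all_algebra all_fingroup all_classical.
From mathcomp Require Import topology.
Set Implicit Arguments. Unset Strict Implicit. Unset Printing Implicit Defensive.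
Local Open Scope classical_set_scope.

Lemma cont_pair_at (X Y Z : topologicalType) (f : X -> Y) (g : X -> Z) x :
  {for x, continuous f} -> {for x, continuous g} ->
  {for x, continuous (fun x => (f x, g x))}.
Proof. by move=> cf cg; apply: cvg_pair; [exact: cf| exact: cg]. Qed.

Lemma cont_cst (X Y : topologicalType) (c : Y) : continuous (fun _ : X => c).
Proof. by move=> x; exact: cvg_cst. Qed.

Lemma cont_id (X : topologicalType) : continuous (fun x : X => x).
Proof. by move=> x; exact: cvg_id. Qed.

Lemma cont_comp (X Y Z : topologicalType) (f : X -> Y) (g : Y -> Z) :
  continuous f -> continuous g -> continuous (fun x => g (f x)).
Proof. by move=> cf cg x; exact: (continuous_comp (cf x) (cg _)). Qed.

Lemma cont_fst (X Y : topologicalType) : continuous (@fst X Y).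
Proof. by move=> x; exact: cvg_fst. Qed.

Lemma cont_snd (X Y : topologicalType) : continuous (@snd X Y).
Proof. by move=> x; exact: cvg_snd. Qed.

Lemma cont_near (X Y : topologicalType) (f g : X -> Y) x :
  (\forall y \near x, g y = f y) -> {for x, continuous g} ->
  {for x, continuous f}.
Proof.
move=> E cg; have fx : g x = f x := nbhs_singleton E.
by apply: cvg_trans (near_eq_cvg E) _; rewrite -fx; exact: cg.
Qed.

Lemma ptws_cont_at (X L : topologicalType) (I : eqType) (g : X -> {ptws I -> L}) x :
  (forall i, {for x, continuous (fun y => g y i)}) -> {for x, continuous g}.
Proof.
move=> h; apply/cvg_sup => i.
have proj_surj : (fun f : {ptws I -> L} => f i) @` setT = setT.
  by apply/seteqP; split => // y _; exists (fun _ => y).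
apply/(@cvg_image _ _ (fun f : {ptws I -> L} => f i)) => // V nV.
exists ((fun f : {ptws I -> L} => f i) @^-1` V); first exact: h.
by rewrite image_preimage.
Qed.

Lemma val_cont (Y : topologicalType) (A : set Y) :
  continuous (fun x : set_type A => val x).
Proof. exact: initial_continuous. Qed.

Lemma sub_cont_at (X Y : topologicalType) (A : set Y) (g : X -> set_type A) x :
  {for x, continuous (fun x => val (g x))} -> {for x, continuous g}.
Proof.
move=> cg U; rewrite nbhsE => -[O [[V oV VO] Ogx] OU].
have nV : nbhs (val (g x)) V.
  by apply: open_nbhs_nbhs; split => //; move: Ogx; rewrite -VO.
apply: (@filterS _ _ _ ((fun x => val (g x)) @^-1` V)) (cg _ nV) => y Vy.
by apply: OU; rewrite -VO; exact: Vy.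
Qed.

Lemma sub_cont (X Y : topologicalType) (A : set Y) (g : X -> set_type A) :
  continuous (fun x => val (g x)) -> continuous g.
Proof. by move=> cg x; apply: sub_cont_at; exact: cg. Qed.

Lemma cluster_cont (X Y : topologicalType) (f : X -> Y) p q :
  continuous f -> cluster (nbhs p) q -> cluster (nbhs (f p)) (f q).
Proof.
move=> cf cl A C nA nC.
have [z [Az Cz]] := cl _ _ (cf p _ nA) (cf q _ nC).
by exists (f z).
Qed.

Lemma hausdorff_pair (X Y : topologicalType) :
  hausdorff_space X -> hausdorff_space Y -> hausdorff_space (X * Y)%type.
Proof.
move=> hX hY [p1 p2] [q1 q2] cl.
have e1 := hX _ _ (cluster_cont (@cont_fst X Y) cl).
have e2 := hY _ _ (cluster_cont (@cont_snd X Y) cl).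
by rewrite /= in e1 e2; rewrite e1 e2.
Qed.

Lemma hausdorff_sub (Y : topologicalType) (A : set Y) :
  hausdorff_space Y -> hausdorff_space (set_type A).
Proof.
move=> hY p q cl; apply: val_inj.
exact: hY _ _ (cluster_cont (@val_cont Y A) cl).
Qed.

Lemma compact_sub (Y : topologicalType) (A : set Y) :
  compact A -> compact [set: set_type A].
Proof.
move=> cA F PF _.
pose vF := fmap (fun x : set_type A => val x) F.
have PvF : ProperFilter vF by exact: fmap_proper_filter.
have vFA : vF A.
  by rewrite /vF /fmap /=; apply: filterS filterT => x _; exact: set_valP.
have [b [Ab clb]] := cA _ PvF vFA.
exists (exist _ b (mem_set Ab)); split => // U N FU.
rewrite nbhsE => -[O [[V oV VO] Ob] ON].
have nV : nbhs b V by apply: open_nbhs_nbhs; split => //; move: Ob; rewrite -VO.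
have vFU : vF ((fun x : set_type A => val x) @` U).
  by rewrite /vF /fmap /=; apply: filterS FU => x Ux; exists x.
have [_ [[a Ua <-] Va]] := clb _ _ vFU nV.
by exists a; split => //; apply: ON; rewrite -VO; exact: Va.
Qed.

Lemma cont_closure (X Y : topologicalType) (f : X -> Y) (A : set X) x :
  continuous f -> closure A x -> closure (f @` A) (f x).
Proof.
move=> cf clx N nN; have [a [Aa Na]] := clx _ (cf x _ nN).
by exists (f a); split => //; exists a.
Qed.

Lemma closure_sub_closed (X : topologicalType) (A C : set X) :
  closed C -> A `<=` C -> closure A `<=` C.
Proof. by move=> cC AC; rewrite (closure_id C).1 //; exact: closureS. Qed.

Lemma dense_closureT (X : topologicalType) (S : set X) :
  dense S -> closure S = setT.
Proof.
move=> dS; apply/seteqP; split => // b _ N; rewrite nbhsE => -[O [oO Ob] ON].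
have [z [Oz Sz]] : O `&` S !=set0 by apply: dS => //; exists b.
by exists z; split => //; exact: ON.
Qed.

Lemma clopen_connected_component (X : topologicalType) (K : set X) x :
  open K -> closed K -> K x ->
  connected_component K x = connected_component [set: X] x.
Proof.
move=> oK cK Kx; apply/seteqP; split => y [C [Cx _ cC] Cy].
  by exists C.
exists C => //; split => //.
have <- : C `&` K = C.
  apply: cC; first by exists x.
  - by exists K.
  - by exists K.
by move=> z [].
Qed.

Section TopologicalGroup.
Context (T : topologicalType) (mul : T -> T -> T) (inv : T -> T) (one : T)
  (hT : topological_group mul inv one).
Let mA := tg_mulA hT.
Let m1 := tg_mul1g hT.
Let mV := tg_mulVg hT.

Lemma tg_mulgV x : mul x (inv x) = one.
Proof.
have e : mul (inv (inv x)) (inv x) = one := mV (inv x).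
by rewrite -[mul x _]m1 -e -mA [mul (inv x) (mul x _)]mA mV m1 e.
Qed.

Lemma tg_mulg1 x : mul x one = x.
Proof. by rewrite -(mV x) mA tg_mulgV m1. Qed.

Lemma tg_mulKg x y : mul (inv x) (mul x y) = y.
Proof. by rewrite mA mV m1. Qed.

Lemma tg_mulKVg x y : mul x (mul (inv x) y) = y.
Proof. by rewrite mA tg_mulgV m1. Qed.

Lemma tg_mulgK x y : mul (mul y x) (inv x) = y.
Proof. by rewrite -mA tg_mulgV tg_mulg1. Qed.

Lemma tg_mulgKV x y : mul (mul y (inv x)) x = y.
Proof. by rewrite -mA mV tg_mulg1. Qed.

Lemma tg_inv_uniq x y : mul x y = one -> inv x = y.
Proof. by move=> e; rewrite -[inv x]tg_mulg1 -e tg_mulKg. Qed.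

Lemma tg_invK x : inv (inv x) = x.
Proof. by apply: tg_inv_uniq; rewrite mV. Qed.

Lemma tg_inv1 : inv one = one.
Proof. by apply: tg_inv_uniq; rewrite m1. Qed.

Lemma tg_invM x y : inv (mul x y) = mul (inv y) (inv x).
Proof. by apply: tg_inv_uniq; rewrite -mA tg_mulKVg tg_mulgV. Qed.

Lemma tg_mulI x y z : mul x y = mul x z -> y = z.
Proof. by move=> e; rewrite -(tg_mulKg x y) e tg_mulKg. Qed.

Lemma tg_mul_cont2_at (X : topologicalType) (f g : X -> T) x :
  {for x, continuous f} -> {for x, continuous g} ->
  {for x, continuous (fun x => mul (f x) (g x))}.
Proof.
move=> cf cg; have mul_cont := tg_mul_cont hT.
exact: (continuous_comp (cont_pair_at cf cg) (mul_cont (f x, g x))).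
Qed.

Lemma tg_mul_cont2 (X : topologicalType) (f g : X -> T) :
  continuous f -> continuous g -> continuous (fun x => mul (f x) (g x)).
Proof. by move=> cf cg x; apply: tg_mul_cont2_at; [exact: cf | exact: cg]. Qed.

Lemma tg_lmul_cont a : continuous (mul a).
Proof. exact: (tg_mul_cont2 (@cont_cst T T a) (@cont_id T)). Qed.

Lemma tg_rmul_cont a : continuous (fun x => mul x a).
Proof. exact: (tg_mul_cont2 (@cont_id T) (@cont_cst T T a)). Qed.

Lemma tg_lmul_closed a (S : set T) : closed S -> closed (mul a @` S).
Proof.
have -> : mul a @` S = mul (inv a) @^-1` S.
  apply/seteqP; split => x; first by case=> y Sy <-; rewrite /= tg_mulKg.
  by move=> Sx; exists (mul (inv a) x) => //; rewrite tg_mulKVg.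
by move=> cS; move/continuous_closedP: (tg_lmul_cont (a := inv a)); apply.
Qed.

Lemma subgroup_closure (S : set T) : subgroup mul inv one S ->
  subgroup mul inv one (closure S).
Proof.
move=> hS.
have closure_lmul a b : S a -> closure S b -> closure S (mul a b).
  move=> Sa clb; apply: (closure_sub_closed (@closed_closure _ _) _
    (cont_closure (tg_lmul_cont (a := a)) clb)).
  by move=> _ [y Sy <-]; exact: (subset_closure (sg_mul hS Sa Sy)).
split.
- exact: (subset_closure (sg_one hS)).
- move=> x y clx cly; apply: (closure_sub_closed (@closed_closure _ _) _
    (cont_closure (tg_rmul_cont (a := y)) clx)).
  by move=> _ [z Sz <-]; exact: closure_lmul.
- move=> x clx; apply: (closure_sub_closed (@closed_closure _ _) _
    (cont_closure (tg_inv_cont hT) clx)).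
  by move=> _ [z Sz <-]; exact: (subset_closure (sg_inv hS Sz)).
Qed.

Lemma subgroup_topological_group (S : set T) (hS : subgroup mul inv one S) :
  topological_group (sub_mul hS) (sub_inv hS) (sub_one hS).
Proof.
split.
- by move=> x y z; apply: val_inj => /=; exact: mA.
- by move=> x; apply: val_inj => /=; exact: m1.
- by move=> x; apply: val_inj => /=; exact: mV.
- apply: sub_cont => /=; apply: tg_mul_cont2.
  + exact: (cont_comp (@cont_fst _ _) (@val_cont _ _)).
  + exact: (cont_comp (@cont_snd _ _) (@val_cont _ _)).
- by apply: sub_cont => /=; exact: (cont_comp (@val_cont _ _) (tg_inv_cont hT)).
Qed.

Lemma tg_cosetE (S : set T) x y : subgroup mul inv one S ->
  (mul x @` S = mul y @` S) <-> S (mul (inv x) y).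
Proof.
move=> hS; split.
  move=> e; have : (mul y @` S) y.
    by exists one; [exact: (sg_one hS) | exact: tg_mulg1].
  by rewrite -e => -[z Sz <-]; rewrite tg_mulKg.
have sub a b : S (mul (inv a) b) -> mul b @` S `<=` mul a @` S.
  move=> Sab _ [z Sz <-]; exists (mul (mul (inv a) b) z).
    exact: (sg_mul hS Sab Sz).
  by rewrite mA tg_mulKVg.
move=> Sxy; apply/seteqP; split; apply: sub => //.
by have := sg_inv hS Sxy; rewrite tg_invM tg_invK.
Qed.

Section FiniteCover.
Context (S : set T) (hS : subgroup mul inv one S) (I : finType) (c : I -> T)
  (cover : forall x, exists i, S (mul (inv (c i)) x)).

Lemma finite_index_of_cover : finite_index mul S.
Proof.
apply: (@sub_finite_set _ _ ((fun i => mul (c i) @` S) @` [set: I])).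
  move=> _ [x _ <-]; have [i Si] := cover x.
  by exists i => //; apply/tg_cosetE.
exact: finite_image.
Qed.

(* A closed subgroup covered by finitely many left translates is open: its
   complement is the finite union of the (closed) translates not meeting it. *)
Lemma subgroup_open_of_cover : closed S -> open S.
Proof.
move=> cS.
pose F i := if `[< S (c i) >] then set0 else mul (c i) @` S.
have -> : S = ~` (\bigcup_(i in [set` enum I]) F i).
  apply/seteqP; split => x.
    move=> Sx [i _]; rewrite /F; case: asboolP => [//|nS] [s Ss e].
    apply: nS; rewrite -[c i](tg_mulgK s) e.
    exact: (sg_mul hS Sx (sg_inv hS Ss)).
  move=> nU; have [//|nSx] := pselect (S x).
  have [i Si] := cover x; exfalso; apply: nU.
  exists i; first by rewrite /= mem_enum.
  rewrite /F; case: asboolP => [Sc|nSc].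
    by apply: nSx; rewrite -(tg_mulKVg (c i) x); exact: (sg_mul hS Sc Si).
  by exists (mul (inv (c i)) x) => //; rewrite tg_mulKVg.
rewrite bigcup_seq openC; apply: closed_bigsetU => i _.
by rewrite /F; case: asboolP => _; [exact: closed0 | exact: tg_lmul_closed].
Qed.
End FiniteCover.

Lemma closure_cover_of_dense (D S : set T) (I : finType) (c : I -> T) :
  dense D -> (forall d, D d -> exists i, S (mul (inv (c i)) d)) ->
  forall x, exists i, closure S (mul (inv (c i)) x).
Proof.
move=> dD coverD x.
pose U := \bigcup_(i in [set` enum I]) (mul (c i) @` closure S).
have cU : closed U.
  rewrite /U bigcup_seq; apply: closed_bigsetU => i _.
  exact: tg_lmul_closed (@closed_closure _ _).
have DU : D `<=` U.
  move=> d /coverD [i Si]; exists i; first by rewrite /= mem_enum.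
  by exists (mul (inv (c i)) d); [exact: subset_closure | rewrite tg_mulKVg].
have : U x by apply: (closure_sub_closed cU DU); rewrite dense_closureT.
by case=> i _ [k Sk <-]; exists i; rewrite tg_mulKg.
Qed.

Lemma coset_transversal (S : set T) (hS : subgroup mul inv one S) :
  finite_index mul S ->
  exists n (t : 'I_n -> T) (idx : T -> 'I_n),
   [/\ forall x, S (mul (inv (t (idx x))) x),
       forall i x, S (mul (inv (t i)) x) -> idx x = i &
       t (idx one) = one].
Proof.
rewrite /finite_index finite_seqP => -[s0 es0].
pose s := undup s0; have us : uniq s := undup_uniq s0.
have memC x : mul x @` S \in s.
  have : [set mul x @` S | x in [set: T]] (mul x @` S) by exists x.
  by rewrite es0 /= mem_undup.
have idxP x : index (mul x @` S) s < size s by rewrite index_mem.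
pose idx x : 'I_(size s) := Ordinal (idxP x).
have nthC (i : 'I_(size s)) : exists x, mul x @` S = nth set0 s i.
  have : nth set0 s i \in s by apply: mem_nth.
  rewrite mem_undup => h; have : [set` s0] (nth set0 s i) by [].
  by rewrite -es0 => -[x _ e]; exists x.
have [t0 ht0] := choice nthC.
pose t i := if i == idx one then one else t0 i.
have ht i : mul (t i) @` S = nth set0 s i.
  by rewrite /t; case: eqP => [->|_]; [rewrite /= nth_index | exact: ht0].
exists (size s), t, idx; split.
- by move=> x; apply/(tg_cosetE _ _ hS); rewrite ht /= nth_index.
- move=> i x /(tg_cosetE _ _ hS); rewrite ht => e; apply: val_inj => /=.
  by rewrite -e index_uniq.
- by rewrite /t eqxx.
Qed.
End TopologicalGroup.

Lemma closed_subgroup_compact_group (T : topologicalType) (mul : T -> T -> T)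
    (inv : T -> T) (one : T) (S : set T) (hS : subgroup mul inv one S) :
  compact_group mul inv one -> closed S ->
  compact_group (sub_mul hS) (sub_inv hS) (sub_one hS).
Proof.
case=> hT cT sT cS; split; first exact: subgroup_topological_group.
- by apply: compact_sub; exact: (subclosed_compact cS cT).
- exact: hausdorff_sub.
Qed.

Section GroupHom.
Context (T U : topologicalType) (mulT : T -> T -> T) (invT : T -> T) (oneT : T)
  (mulU : U -> U -> U) (invU : U -> U) (oneU : U)
  (hT : topological_group mulT invT oneT) (hU : topological_group mulU invU oneU)
  (f : T -> U) (hf : group_hom mulT mulU f).

Lemma hom1 : f oneT = oneU.
Proof.
apply: (tg_mulI hU (x := f oneT)).
by rewrite -hf (tg_mulg1 hT) (tg_mulg1 hU).
Qed.

Lemma homV x : f (invT x) = invU (f x).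
Proof. by symmetry; apply: (tg_inv_uniq hU); rewrite -hf (tg_mulgV hT) hom1. Qed.

Lemma image_subgroup (S : set T) : subgroup mulT invT oneT S ->
  subgroup mulU invU oneU (f @` S).
Proof.
move=> hS; split.
- by exists oneT; [exact: (sg_one hS) | exact: hom1].
- move=> _ _ [x Sx <-] [y Sy <-]; exists (mulT x y); last by rewrite hf.
  exact: (sg_mul hS Sx Sy).
- move=> _ [x Sx <-]; exists (invT x); last by rewrite homV.
  exact: (sg_inv hS Sx).
Qed.
End GroupHom.

Section RestrToClosure.
Context (T U : topologicalType) (f : T -> U) (A : set T).

Lemma restr_to_closure_cont : continuous f -> continuous (restr_to_closure f A).
Proof.
by move=> cf; apply: sub_cont => /=; exact: cont_comp (@val_cont _ _) cf.
Qed.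

Lemma restr_to_closure_hom (mulT : T -> T -> T) (invT : T -> T) (oneT : T)
    (mulU : U -> U -> U) (invU : U -> U) (oneU : U)
    (hA : subgroup mulT invT oneT A)
    (hfA : subgroup mulU invU oneU (closure (f @` A))) :
  group_hom mulT mulU f ->
  group_hom (sub_mul hA) (sub_mul hfA) (restr_to_closure f A).
Proof. by move=> hf x y; apply: val_inj => /=; exact: hf. Qed.

Lemma restr_to_closure_dense : dense (range (restr_to_closure f A)).
Proof.
move=> O [k Ok] [V oV VO].
have nV : nbhs (val k) V.
  by apply: open_nbhs_nbhs; split => //; move: Ok; rewrite -VO.
have [_ [[a Aa <-] Va]] := set_valP k V nV.
exists (restr_to_closure f A (exist _ a (mem_set Aa))); split.
  by rewrite -VO.
by exists (exist _ a (mem_set Aa)).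
Qed.
End RestrToClosure.

(* The wreath product L wr S_n = S_n x L^n, a compact group when L is; its
   elements act as monomial "matrices" and it is the target of induction. *)
Notation wreath L n :=
  (discrete_topology {perm 'I_n} * {ptws 'I_n -> L})%type.

Section Wreath.
Context (L : topologicalType) (mulL : L -> L -> L) (invL : L -> L) (oneL : L)
  (n : nat).

Definition wmul (a b : wreath L n) : wreath L n :=
  ((b.1 * a.1)%g, fun i => mulL (a.2 (b.1 i)) (b.2 i)).
Definition winv (a : wreath L n) : wreath L n :=
  ((a.1^-1)%g, fun i => invL (a.2 ((a.1^-1)%g i))).
Definition wone : wreath L n := (1%g, fun _ => oneL).

Lemma wcoord_cont i : continuous (fun w : wreath L n => w.2 i).
Proof.
exact: (cont_comp (@cont_snd (discrete_topology {perm 'I_n}) {ptws 'I_n -> L})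
  (@proj_continuous _ (fun _ => L) i)).
Qed.

Hypothesis hL : topological_group mulL invL oneL.

(* Since the permutation part is discrete, near a point the operations only
   act through the continuous group operations of L on the coordinates. *)
Lemma wmul_cont : continuous (fun p : wreath L n * wreath L n => wmul p.1 p.2).
Proof.
move=> p.
have c11 : continuous (fun q : wreath L n * wreath L n => q.1.1) :=
  cont_comp (@cont_fst _ _) (@cont_fst _ _).
have c21 : continuous (fun q : wreath L n * wreath L n => q.2.1) :=
  cont_comp (@cont_snd _ _) (@cont_fst _ _).
have n1 : \forall q \near p, q.1.1 = p.1.1 := c11 p _ (discrete_set1 _).
have n2 : \forall q \near p, q.2.1 = p.2.1 := c21 p _ (discrete_set1 _).
pose G (q : wreath L n * wreath L n) : wreath L n :=
  ((p.2.1 * p.1.1)%g, fun i => mulL (q.1.2 (p.2.1 i)) (q.2.2 i)).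
apply: (@cont_near _ _ _ G).
  by move: n1 n2; apply: filterS2 => q e1 e2; rewrite /G /wmul e1 -e2.
apply: cont_pair_at; first exact: cont_cst.
apply: ptws_cont_at => i; apply: (tg_mul_cont2_at hL).
  exact: (cont_comp (@cont_fst (wreath L n) (wreath L n)) (wcoord_cont (i := _))).
exact: (cont_comp (@cont_snd (wreath L n) (wreath L n)) (wcoord_cont (i := _))).
Qed.

Lemma winv_cont : continuous winv.
Proof.
move=> p.
have n1 : \forall q \near p, q.1 = p.1 := (@cont_fst _ _) p _ (discrete_set1 _).
pose G (q : wreath L n) : wreath L n :=
  ((p.1^-1)%g, fun i => invL (q.2 ((p.1^-1)%g i))).
apply: (@cont_near _ _ _ G).
  by move: n1; apply: filterS => q e1; rewrite /G /winv -e1.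
apply: cont_pair_at; first exact: cont_cst.
apply: ptws_cont_at => i.
exact: (cont_comp (wcoord_cont (i := _)) (tg_inv_cont hL)).
Qed.

Lemma wreath_topological_group : topological_group wmul winv wone.
Proof.
split; [| | | exact: wmul_cont | exact: winv_cont].
- move=> [a f] [b g] [c h]; rewrite /wmul /=; congr pair; first by rewrite mulgA.
  by apply: funext => i; rewrite permM (tg_mulA hL).
- move=> [a f]; rewrite /wmul /=; congr pair; first by rewrite mulg1.
  by apply: funext => i; rewrite (tg_mul1g hL).
- move=> [a f]; rewrite /wmul /wone /=; congr pair; first by rewrite mulgV.
  by apply: funext => i; rewrite permK (tg_mulVg hL).
Qed.
End Wreath.

Lemma wreath_compact_group (L : topologicalType) (mulL : L -> L -> L)
    (invL : L -> L) (oneL : L) (n : nat) :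
  compact_group mulL invL oneL ->
  compact_group (@wmul L mulL n) (@winv L invL n) (@wone L oneL n).
Proof.
case=> hL cL sL; split; first exact: wreath_topological_group.
- rewrite -setXTT; apply: compact_setX.
    by apply: finite_compact; exact: (@finite_finset {perm 'I_n} setT).
  have := @tychonoff 'I_n (fun _ => L) (fun _ => setT) (fun _ => cL).
  by congr compact; apply/seteqP; split.
- apply: hausdorff_pair; first exact: discrete_hausdorff.
  exact: hausdorff_product.
Qed.

(* Induction from an open subgroup H of finite index with transversal t: a
   continuous homomorphism alpha : H -> L yields a continuous homomorphism
   Phi : G -> L wr S_n, where g permutes the cosets t i H and its i-th
   coordinate is the H-part alpha(t_j^-1 g t_i) of g t_i = t_j h. *)
Section Induction.
Context (G : topologicalType) (mulG : G -> G -> G) (invG : G -> G) (oneG : G)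
  (hG : topological_group mulG invG oneG) (H : set G)
  (hH : subgroup mulG invG oneG H)
  (n : nat) (t : 'I_n -> G) (idx : G -> 'I_n)
  (tA : forall x, H (mulG (invG (t (idx x))) x))
  (tB : forall i x, H (mulG (invG (t i)) x) -> idx x = i)
  (L : topologicalType) (mulL : L -> L -> L) (alpha : set_type H -> L).
Let mA := tg_mulA hG.

Definition pH (x : G) : set_type H :=
  match pselect (H x) with
  | left hx => exist _ x (mem_set hx)
  | right _ => sub_one hH
  end.

Lemma pH_val x : H x -> val (pH x) = x.
Proof. by move=> hx; rewrite /pH; case: pselect. Qed.

Lemma pH_valK (h : set_type H) : pH (val h) = h.
Proof. by apply: val_inj; rewrite pH_val //; exact: set_valP. Qed.

Lemma pH_mul x y : H x -> H y -> sub_mul hH (pH x) (pH y) = pH (mulG x y).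
Proof.
move=> hx hy; apply: val_inj; rewrite /= !pH_val //.
exact: (sg_mul hH hx hy).
Qed.

Lemma pH_cont x : open H -> H x -> {for x, continuous pH}.
Proof.
move=> oH hx; apply: sub_cont_at; apply: (@cont_near _ _ _ id); last exact: cvg_id.
have : nbhs x H by apply: open_nbhs_nbhs.
by apply: filterS => y hy; rewrite pH_val.
Qed.

Lemma coset_perm_inj g : injective (fun i => idx (mulG g (t i))).
Proof.
move=> i j /= e.
have hi := tA (mulG g (t i)); have hj := tA (mulG g (t j)); rewrite e in hi.
have : H (mulG (invG (t i)) (t j)).
  have := sg_mul hH (sg_inv hH hi) hj.
  rewrite (tg_invM hG) (tg_invK hG) (tg_invM hG).
  by rewrite !mA (tg_mulgK hG) (tg_mulgKV hG).
move/tB => <-; apply: tB.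
by rewrite (tg_mulVg hG); exact: (sg_one hH).
Qed.

Definition coset_perm g : {perm 'I_n} := perm (@coset_perm_inj g).

Definition Phi (g : G) : wreath L n :=
  (coset_perm g,
   fun i => alpha (pH (mulG (invG (t (idx (mulG g (t i))))) (mulG g (t i))))).

Lemma idx_mul g g' i :
  idx (mulG (mulG g g') (t i)) = idx (mulG g (t (idx (mulG g' (t i))))).
Proof.
set j := idx (mulG g' (t i)); set k := idx (mulG g (t j)).
apply: tB; have := sg_mul hH (tA (mulG g (t j))) (tA (mulG g' (t i))).
by rewrite -/j -/k !mA (tg_mulgK hG).
Qed.

Lemma Phi_hom : group_hom (sub_mul hH) mulL alpha ->
  group_hom mulG (@wmul L mulL n) Phi.
Proof.
move=> halpha g g'; rewrite /Phi /wmul /=; congr pair.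
  by apply/permP => i; rewrite permM !permE /= idx_mul.
apply: funext => i; rewrite permE /= -halpha pH_mul ?tA //.
by rewrite idx_mul !mA (tg_mulgK hG).
Qed.

Lemma idx_locally_constant : open H -> forall g0,
  \forall g \near g0, forall i, idx (mulG g (t i)) = idx (mulG g0 (t i)).
Proof.
move=> oH g0; apply: filter_forall => i; set j := idx (mulG g0 (t i)).
have cm : continuous (fun g => mulG (invG (t j)) (mulG g (t i))).
  exact: (tg_mul_cont2 hG (@cont_cst _ _ _) (tg_rmul_cont hG (a := t i))).
have : nbhs (mulG (invG (t j)) (mulG g0 (t i))) H.
  by apply: open_nbhs_nbhs; split => //; exact: tA.
move/(cm g0).
apply: (@filterS _ _ _ ((fun g => mulG (invG (t j)) (mulG g (t i))) @^-1` H)).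
by move=> g; exact: tB.
Qed.

Lemma Phi_cont : open H -> continuous alpha -> continuous Phi.
Proof.
move=> oH calpha g0.
pose Gf (g : G) : wreath L n := (coset_perm g0,
  fun i => alpha (pH (mulG (invG (t (idx (mulG g0 (t i))))) (mulG g (t i))))).
apply: (@cont_near _ _ _ Gf).
  move: (idx_locally_constant oH g0); apply: filterS => g e.
  rewrite /Gf /Phi; congr pair; last by apply: funext => i; rewrite e.
  by apply/permP => i; rewrite !permE /= e.
apply: cont_pair_at; first exact: cont_cst.
apply: ptws_cont_at => i.
apply: continuous_comp; last exact: calpha.
apply: continuous_comp; last exact: pH_cont (tA _).
exact: (tg_mul_cont2 hG (@cont_cst _ _ _) (tg_rmul_cont hG (a := t i))).
Qed.

Lemma Phi_restr (tC : t (idx oneG) = oneG) (h : set_type H) :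
  (Phi (val h)).2 (idx oneG) = alpha h.
Proof.
have idx_h : idx (val h) = idx oneG.
  by apply: tB; rewrite tC (tg_inv1 hG) (tg_mul1g hG); exact: set_valP.
by rewrite /Phi /= tC (tg_mulg1 hG) idx_h tC (tg_inv1 hG) (tg_mul1g hG) pH_valK.
Qed.
End Induction.

Unset Implicit Arguments. Set Strict Implicit.
Theorem proposition2p4
  (G : topologicalType) (mulG : G -> G -> G) (invG : G -> G) (oneG : G)
  (B : topologicalType) (mulB : B -> B -> B) (invB : B -> B) (oneB : B)
  (beta : G -> B) (H : set G)
  (hG : topological_group mulG invG oneG)
  (hB : bohr_compactification mulG invG oneG mulB invB oneB beta)
  (hH : subgroup mulG invG oneG H)
  (Hclosed : closed H)
  (Hfin : finite_index mulG H) :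
  exists hK : subgroup mulB invB oneB (closure (beta @` H)),
    [/\ finite_index mulB (closure (beta @` H)),
        bohr_compactification (sub_mul hH) (sub_inv hH) (sub_one hH)
          (sub_mul hK) (sub_inv hK) (sub_one hK)
          (restr_to_closure beta H) &
        connected_component (closure (beta @` H)) oneB
          = connected_component [set: B] oneB].
Proof.
case: (hB) => hBc cbeta hbeta dbeta univ.
have hBt : topological_group mulB invB oneB by case: hBc.
have hK := subgroup_closure hBt (image_subgroup hG hBt hbeta hH).
have [n [t [idx [tA tB tC]]]] := coset_transversal hG hH Hfin.
have coverK : forall b, exists i, closure (beta @` H) (mulB (invB (beta (t i))) b).
  apply: (closure_cover_of_dense hBt dbeta) => _ [g _ <-]; exists (idx g).
  by rewrite -(homV hG hBt hbeta) -hbeta; exists (mulG (invG (t (idx g))) g).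
have Hopen : open H.
  by apply: (subgroup_open_of_cover hG hH (c := t)) => // x; exists (idx x).
exists hK; split.
- exact: (finite_index_of_cover hBt hK coverK).
- split.
  + exact: (closed_subgroup_compact_group hK hBc (@closed_closure _ _)).
  + exact: restr_to_closure_cont.
  + exact: restr_to_closure_hom.
  + exact: restr_to_closure_dense.
  + (* Extend alpha by inducing it to G and factoring through beta. *)
    move=> L mulL invL oneL alpha hL calpha halpha.
    have [Psi [cPsi ePsi]] := univ _ _ _ _ _ (wreath_compact_group n hL)
      (Phi_cont (hG := hG) (tA := tA) (tB := tB) Hopen calpha)
      (Phi_hom hG tA tB halpha).
    exists (fun k => (Psi (val k)).2 (idx oneG)); split.
      exact: cont_comp (@val_cont _ _) (cont_comp cPsi (wcoord_cont (i := _))).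
    apply: funext => h /=.
    by rewrite -(Phi_restr hG hH tA tB alpha tC) ePsi.
- apply: clopen_connected_component (@closed_closure _ _) (sg_one hK).
  exact: (subgroup_open_of_cover hBt hK coverK (@closed_closure _ _)).
Qed.
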